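(* Let $\mathcal H=\mathcal H_A\otimes\mathcal H_B$ be finite-dimensional with $d=\dim\mathcal H$, local Hamiltonians $H_X(t_i)=\sum_{l_X}E^i_{l_X}\Pi^i_{l_X}$, $H_X(t_f)=\sum_{k_X}E^f_{k_X}\Pi^f_{k_X}$ ($X=A,B$), a CPTP map $\Phi$ on $\mathcal H$, $\beta>0$, local thermal states $\gamma^X_{\beta,i}=e^{-\beta H_X(t_i)}/\mathcal Z^X_{\beta,i}$, $\gamma^X_{\beta,f}=e^{-\beta H_X(t_f)}/\mathcal Z^X_{\beta,f}$, $\gamma_{\beta,i}=\gamma^A_{\beta,i}\otimes\gamma^B_{\beta,i}$, $\gamma_{\beta,f}=\gamma^A_{\beta,f}\otimes\gamma^B_{\beta,f}$, $\Delta F=-\beta^{-1}\ln\big(\mathcal Z^A_{\beta,f}\mathcal Z^B_{\beta,f}/(\mathcal Z^A_{\beta,i}\mathcal Z^B_{\beta,i})\big)$. Let the initial state have best separable approximation $\rho_i=\lambda\rho_{\mathcal E}+(1-\lambda)\rho_{\mathcal S}$ with $\rho_{\mathcal S}=\sum_j r_j\rho^A_j\otimes\rho^B_j$ ($r_j\ge0$, $\sum_jr_j=1$), and let each local state be decomposed as $\rho^X_j=(1-a^X_j)\gamma^X_{\beta,i}+a^X_j(1-c^X_j)\tau^X_{d_j}+a^X_jc^X_j\tau^X_{c_j}$ ($X=A,B$), where $a^X_j$ is the weight of athermality of $\rho^X_j$ w.r.t. $\gamma^X_{\beta,i}$ and $c^X_j,\tau^X_{d_j},\tau^X_{c_j}$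 come from the weight-of-coherence decomposition of the minimal athermal state in the eigenbasis of $H_X(t_i)$. Define $\rho_{d_j}=(1-a^A_j)a^B_j(1-c^B_j)\gamma^A_{\beta,i}\otimes\tau^B_{d_j}+a^A_j(1-c^A_j)(1-a^B_j)\tau^A_{d_j}\otimes\gamma^B_{\beta,i}+a^A_j(1-c^A_j)a^B_j(1-c^B_j)\tau^A_{d_j}\otimes\tau^B_{d_j}$ and $\rho_{c_j}=(1-a^A_j)a^B_jc^B_j\gamma^A_{\beta,i}\otimes\tau^B_{c_j}+a^A_jc^A_j(1-a^B_j)\tau^A_{c_j}\otimes\gamma^B_{\beta,i}+a^A_j(1-c^A_j)a^B_jc^B_j\tau^A_{d_j}\otimes\tau^B_{c_j}+a^A_jc^A_ja^B_j(1-c^B_j)\tau^A_{c_j}\otimes\tau^B_{d_j}+a^A_jc^A_ja^B_jc^B_j\tau^A_{c_j}\otimes\tau^B_{c_j}$. Then the bipartite EPM average satisfies $\langle e^{-\beta(\Delta E-\Delta F)}\rangle=\mathcal J^{(i)}\mathcal J^{(f)}$ with $$\mathcal J^{(i)}=\lambda\,\mathrm{Tr}(\gamma_{\beta,i}^{-1}\rho_{\mathcal E})+(1-\lambda)\sum_jr_j\Big((1-a^A_j)(1-a^B_j)d+\mathrm{Tr}(\gamma_{\beta,i}^{-1}\rho_{d_j})+\mathrm{Tr}(\gamma_{\beta,i}^{-1}\rho_{c_j})\Big),$$ $$\mathcal J^{(f)}=\lambda\,\mathrm{Tr}(\gamma_{\beta,f}\Phi[\rho_{\mathcal E}])+(1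-\lambda)\sum_jr_j\Big((1-a^A_j)(1-a^B_j)\mathrm{Tr}(\gamma_{\beta,f}\Phi[\gamma_{\beta,i}])+\mathrm{Tr}(\gamma_{\beta,f}\Phi[\rho_{d_j}])+\mathrm{Tr}(\gamma_{\beta,f}\Phi[\rho_{c_j}])\Big).$$
   Context: Bipartite EPM statistics: with $\mathbf l=(l_A,l_B)$, $\mathbf k=(k_A,k_B)$, $p^{\mathbf l,\mathbf k}=\mathrm{Tr}(\rho_i\,\Pi^i_{l_A}\otimes\Pi^i_{l_B})\mathrm{Tr}(\Phi[\rho_i]\,\Pi^f_{k_A}\otimes\Pi^f_{k_B})$, $\Delta E_{\mathbf l,\mathbf k}=E^f_{k_A}+E^f_{k_B}-E^i_{l_A}-E^i_{l_B}$, $\langle g(\Delta E)\rangle=\sum p^{\mathbf l,\mathbf k}g(\Delta E_{\mathbf l,\mathbf k})$. Best separable approximation (BSA): the decomposition $\rho=\lambda\rho_{\mathcal E}+(1-\lambda)\rho_{\mathcal S}$ with $\rho_{\mathcal E}$ a density operator, $\rho_{\mathcal S}$ separable, and $\lambda\in[0,1]$ minimal. Weight of athermality w.r.t. full-rank thermal $\gamma$: $\min\{a\ge0:\rho=(1-a)\gamma+a\tau,\ \tau\text{ a density operator}\}$, optimal $\tau$ the minimal athermal state. Weight of coherence w.r.t. a basis: $\min\{c\ge0:\tau=(1-c)\tau_d+c\tau_c,\ \tau_d\text{ diagonal},\ \tau_c\text{ a density operator}\}$. *)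

From mathcomp Require Import all_boot all_order all_algebra.
From mathcomp Require Import all_classical all_reals all_analysis.
From mathcomp Require Import complex mxtens.
Set Implicit Arguments. Unset Strict Implicit. Unset Printing Implicit Defensive.
Import Order.TTheory GRing.Theory Num.Theory.
Local Open Scope ring_scope.
Local Open Scope complex_scope.

Section QDefs.
Variable R : realType.
Local Notation C := (R[i]).

Definition rc (x : R) : C := x%:C.

Definition adjmx {m n} (M : 'M[C]_(m, n)) : 'M[C]_(n, m) := (map_mx conjc M)^T.

(* positive semidefinite: <v, M v> >= 0 (in the order of C, i.e. real and
   nonnegative) for every vector v *)
Definition psd {n} (M : 'M[C]_n) : Prop :=
  forall v : 'cV[C]_n, 0 <= (adjmx v *m M *m v) 0 0.

Definition density {n} (M : 'M[C]_n) : Prop := psd M /\ \tr M = 1.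

Definition proj_family {n k} (P : 'I_k -> 'M[C]_n) : Prop :=
  (forall l, P l *m P l = P l /\ adjmx (P l) = P l) /\
  (forall l m, l != m -> P l *m P m = 0) /\
  \sum_l P l = 1%:M.

Definition hamiltonian {n k} (E : 'I_k -> R) (P : 'I_k -> 'M[C]_n) : 'M[C]_n :=
  \sum_l rc (E l) *: P l.

Definition fcalc {n k} (f : R -> R) (E : 'I_k -> R) (P : 'I_k -> 'M[C]_n)
  : 'M[C]_n := \sum_l rc (f (E l)) *: P l.

Definition expmH {n k} (beta : R) (E : 'I_k -> R) (P : 'I_k -> 'M[C]_n) :=
  fcalc (fun e => expR (- (beta * e))) E P.

(* partition function Z = Tr e^{-beta H} (a positive real) *)
Definition partition_fn {n k} (beta : R) (E : 'I_k -> R) (P : 'I_k -> 'M[C]_n)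
  : R := complex.Re (\tr (expmH beta E P)).

Definition gibbs {n k} (beta : R) (E : 'I_k -> R) (P : 'I_k -> 'M[C]_n)
  : 'M[C]_n := rc (partition_fn beta E P)^-1 *: expmH beta E P.

Definition linear_map {n} (Phi : 'M[C]_n -> 'M[C]_n) : Prop :=
  forall (a : C) (X Y : 'M[C]_n), Phi (a *: X + Y) = a *: Phi X + Phi Y.

Definition trace_preserving {n} (Phi : 'M[C]_n -> 'M[C]_n) : Prop :=
  forall X, \tr (Phi X) = \tr X.

(* Phi (x) id_m acting on M_n (x) M_m (Kronecker index convention of tensmx) *)
Definition ampliation {n} (m : nat) (Phi : 'M[C]_n -> 'M[C]_n)
  (X : 'M[C]_(n * m)) : 'M[C]_(n * m) :=
  \matrix_(p, q)
    (Phi (\matrix_(a, b) X (mxtens_index (a, (mxtens_unindex p).2))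
                           (mxtens_index (b, (mxtens_unindex q).2))))
      (mxtens_unindex p).1 (mxtens_unindex q).1.

Definition completely_positive {n} (Phi : 'M[C]_n -> 'M[C]_n) : Prop :=
  forall (m : nat) (X : 'M[C]_(n * m)), psd X -> psd (ampliation Phi X).

Definition CPTP {n} (Phi : 'M[C]_n -> 'M[C]_n) : Prop :=
  linear_map Phi /\ completely_positive Phi /\ trace_preserving Phi.

Definition separable {m n} (rho : 'M[C]_(m * n)) : Prop :=
  exists (J : nat) (r : 'I_J -> R) (rA : 'I_J -> 'M[C]_m) (rB : 'I_J -> 'M[C]_n),
    (forall j, 0 <= r j) /\ \sum_j r j = 1 /\
    (forall j, density (rA j) /\ density (rB j)) /\
    rho = \sum_j rc (r j) *: tensmx (rA j) (rB j).

Definition is_BSA {m n} (rho : 'M[C]_(m * n)) (lam : R) (rhoE rhoS : 'M[C]_(m * n))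
  : Prop :=
  0 <= lam <= 1 /\ density rhoE /\ separable rhoS /\
  rho = rc lam *: rhoE + rc (1 - lam) *: rhoS /\
  (forall (lam' : R) (rhoE' rhoS' : 'M[C]_(m * n)),
      0 <= lam' <= 1 -> density rhoE' -> separable rhoS' ->
      rho = rc lam' *: rhoE' + rc (1 - lam') *: rhoS' -> lam <= lam').

Definition athermality_decomp {n} (gamma rho : 'M[C]_n) (a : R) (tau : 'M[C]_n)
  : Prop :=
  0 <= a /\ density tau /\ rho = rc (1 - a) *: gamma + rc a *: tau /\
  (forall (a' : R) (tau' : 'M[C]_n), 0 <= a' -> density tau' ->
      rho = rc (1 - a') *: gamma + rc a' *: tau' -> a <= a').

Definition eigenbasis {n} (U H : 'M[C]_n) : Prop :=
  adjmx U *m U = 1%:M /\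
  forall j : 'I_n, exists e : R, H *m col j U = rc e *: col j U.

Definition diag_in {n} (U tau : 'M[C]_n) : bool := is_diag_mx (adjmx U *m tau *m U).

Definition coherence_decomp {n} (U tau : 'M[C]_n) (c : R) (taud tauc : 'M[C]_n)
  : Prop :=
  0 <= c /\ density taud /\ diag_in U taud /\ density tauc /\
  tau = rc (1 - c) *: taud + rc c *: tauc /\
  (forall (c' : R) (taud' tauc' : 'M[C]_n), 0 <= c' -> density taud' ->
      diag_in U taud' -> density tauc' ->
      tau = rc (1 - c') *: taud' + rc c' *: tauc' -> c <= c').

Definition epm_average {dA dB nAi nBi nAf nBf : nat}
  (rho : 'M[C]_(dA * dB)) (Phi : 'M[C]_(dA * dB) -> 'M[C]_(dA * dB))
  (EAi : 'I_nAi -> R) (PAi : 'I_nAi -> 'M[C]_dA)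
  (EBi : 'I_nBi -> R) (PBi : 'I_nBi -> 'M[C]_dB)
  (EAf : 'I_nAf -> R) (PAf : 'I_nAf -> 'M[C]_dA)
  (EBf : 'I_nBf -> R) (PBf : 'I_nBf -> 'M[C]_dB) (g : R -> R) : C :=
  \sum_(lA < nAi) \sum_(lB < nBi) \sum_(kA < nAf) \sum_(kB < nBf)
    (\tr (rho *m tensmx (PAi lA) (PBi lB)) *
     \tr (Phi rho *m tensmx (PAf kA) (PBf kB))) *
    rc (g (EAf kA + EBf kB - EAi lA - EBi lB)).

Definition rho_dj {dA dB} (aA cA aB cB : R) (gA : 'M[C]_dA) (gB : 'M[C]_dB)
  (tdA : 'M[C]_dA) (tdB : 'M[C]_dB) : 'M[C]_(dA * dB) :=
  rc ((1 - aA) * aB * (1 - cB)) *: tensmx gA tdB +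
  rc (aA * (1 - cA) * (1 - aB)) *: tensmx tdA gB +
  rc (aA * (1 - cA) * aB * (1 - cB)) *: tensmx tdA tdB.

Definition rho_cj {dA dB} (aA cA aB cB : R) (gA : 'M[C]_dA) (gB : 'M[C]_dB)
  (tdA tcA : 'M[C]_dA) (tdB tcB : 'M[C]_dB) : 'M[C]_(dA * dB) :=
  rc ((1 - aA) * aB * cB) *: tensmx gA tcB +
  rc (aA * cA * (1 - aB)) *: tensmx tcA gB +
  rc (aA * (1 - cA) * aB * cB) *: tensmx tdA tcB +
  rc (aA * cA * aB * (1 - cB)) *: tensmx tcA tdB +
  rc (aA * cA * aB * cB) *: tensmx tcA tcB.

End QDefs.

(* The Jarzynski weight factorises over the two projective measurements:
   since DF is built from the partition functions, e^{-beta (DE - DF)} is the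
   product of the eigenvalues Z_i e^{beta E_l} of gamma_i^-1 and
   Z_f^-1 e^{-beta E_k} of gamma_f on the measured projectors, so the EPM
   average equals Tr(gamma_i^-1 rho_i) Tr(gamma_f Phi[rho_i]).  Both factors
   are linear in rho_i; inserting the best separable approximation and
   multiplying out the local decompositions
   rho^X_j = (1 - a) gamma + a ((1 - c) tau_d + c tau_c) yields J^(i) and
   J^(f), with Tr(gamma_i^-1 gamma_i) = d. *)

From HB Require Import structures.
From mathcomp Require Import all_boot all_order all_algebra.
From mathcomp Require Import all_classical all_reals all_analysis.
From mathcomp Require Import complex mxtens.
From mathcomp Require Import ring.
Set Implicit Arguments. Unset Strict Implicit. Unset Printing Implicit Defensive.
Import Order.TTheory GRing.Theory Num.Theory.
Local Open Scope ring_scope.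
Local Open Scope complex_scope.

Section TensorProduct.
Variable R : comPzRingType.

Lemma tensmxDl {m n p q} (A1 A2 : 'M[R]_(m, n)) (B : 'M[R]_(p, q)) :
  tensmx (A1 + A2) B = tensmx A1 B + tensmx A2 B.
Proof. by apply/matrixP=> i j; rewrite !mxE mulrDl. Qed.

Lemma tensmxDr {m n p q} (A : 'M[R]_(m, n)) (B1 B2 : 'M[R]_(p, q)) :
  tensmx A (B1 + B2) = tensmx A B1 + tensmx A B2.
Proof. by apply/matrixP=> i j; rewrite !mxE mulrDr. Qed.

Lemma tensmxZ {m n p q} (a b : R) (A : 'M[R]_(m, n)) (B : 'M[R]_(p, q)) :
  tensmx (a *: A) (b *: B) = (a * b) *: tensmx A B.
Proof. by apply/matrixP=> i j; rewrite !mxE mulrACA. Qed.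

Lemma tensmx_sum {m n p q k l} (F : 'I_k -> 'M[R]_(m, n)) (G : 'I_l -> 'M[R]_(p, q)) :
  tensmx (\sum_i F i) (\sum_j G j) = \sum_i \sum_j tensmx (F i) (G j).
Proof.
rewrite (big_morph (fun A : 'M[R]_(m, n) => tensmx A (\sum_j G j))
                  (fun A1 A2 => tensmxDl A1 A2 _) (tens0mx _)).
apply: eq_bigr => i _.
exact: (big_morph (@tensmx R m n p q (F i)) (tensmxDr _) (tensmx0 _)).
Qed.

Lemma tensmx1 m n : tensmx (1%:M : 'M[R]_m) (1%:M : 'M[R]_n) = 1%:M.
Proof.
apply/matrixP=> i j.
case: (mxtens_indexP i) => a b; case: (mxtens_indexP j) => c d.
rewrite tensmxE !mxE (inj_eq (can_inj (@mxtens_indexK _ _))) xpair_eqE.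
by case: (a == c); case: (b == d); rewrite ?mulr1 ?mulr0.
Qed.

End TensorProduct.

Lemma invmx_tensmx (R : comUnitRingType) m n (A A' : 'M[R]_m) (B B' : 'M[R]_n) :
  A *m A' = 1%:M -> B *m B' = 1%:M -> invmx (tensmx A B) = tensmx A' B'.
Proof.
move=> AA' BB'.
have ABAB' : tensmx A B *m tensmx A' B' = 1%:M by rewrite tensmx_mul AA' BB' tensmx1.
have [AB_unit _] := mulmx1_unit ABAB'.
by rewrite -[LHS]mulmx1 -ABAB' mulKmx.
Qed.

Section SpectralCalculus.
Variable R : realType.
Local Notation C := (R[i]).

Lemma fcalc_mulmx {n k} (f g : R -> R) (E : 'I_k -> R) (P : 'I_k -> 'M[C]_n) :
  proj_family P -> fcalc f E P *m fcalc g E P = fcalc (fun e => f e * g e) E P.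
Proof.
move=> [P_proj [P_orth _]]; rewrite /fcalc mulmx_suml; apply: eq_bigr => l _.
rewrite mulmx_sumr (bigD1 l) //= big1 ?addr0 => [|l' l'l].
  by rewrite -scalemxAl -scalemxAr (P_proj l).1 scalerA /rc rmorphM.
by rewrite -scalemxAl -scalemxAr P_orth ?scaler0 // eq_sym.
Qed.

Lemma fcalc1 {n k} (E : 'I_k -> R) (P : 'I_k -> 'M[C]_n) :
  proj_family P -> fcalc (fun=> 1) E P = 1%:M.
Proof. by move=> [_ [_ <-]]; apply: eq_bigr => l _; rewrite /rc scale1r. Qed.

Lemma mxtrace_proj_ge0 {n} (P : 'M[C]_n) : P *m P = P -> adjmx P = P -> 0 <= \tr P.
Proof.
move=> P_idem P_adj; apply: sumr_ge0 => i _; rewrite -{1}P_idem mxE.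
apply: sumr_ge0 => j _.
have -> : P j i = (P i j)^* by rewrite -{1}P_adj !mxE.
exact: mulcJ_ge0.
Qed.

Lemma partition_fn_gt0 {n k} beta (E : 'I_k -> R) (P : 'I_k -> 'M[C]_n) :
  proj_family P -> (0 < n)%N -> 0 < partition_fn beta E P.
Proof.
move=> [P_proj [_ P_sum]] n_gt0.
have trP_ge0 l : 0 <= \tr (P l) by apply: mxtrace_proj_ge0; case: (P_proj l).
have w_gt0 l : 0 < rc (expR (- (beta * E l))) by rewrite ltcR expR_gt0.
have term_ge0 l : 0 <= \tr (rc (expR (- (beta * E l))) *: P l).
  by rewrite mxtraceZ mulr_ge0 // ltW.
have trP_sum : \sum_l \tr (P l) != 0.
  by rewrite -raddf_sum /= P_sum mxtrace1 pnatr_eq0 -lt0n.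
suff : 0 < \tr (expmH beta E P) by rewrite ltcE => /andP[_].
rewrite /expmH /fcalc raddf_sum /= lt_def sumr_ge0 ?andbT // psumr_neq0 //.
move: trP_sum; rewrite psumr_neq0 // => /hasP[l _ /= trPl].
by apply/hasP; exists l; rewrite ?mem_index_enum //= mxtraceZ mulr_gt0.
Qed.

Definition gibbs_inv {n k} beta (E : 'I_k -> R) (P : 'I_k -> 'M[C]_n) : 'M[C]_n :=
  fcalc (fun e => partition_fn beta E P * expR (beta * e)) E P.

Lemma gibbsE {n k} beta (E : 'I_k -> R) (P : 'I_k -> 'M[C]_n) :
  gibbs beta E P = fcalc (fun e => (partition_fn beta E P)^-1 * expR (- (beta * e))) E P.
Proof.
rewrite /gibbs /expmH /fcalc scaler_sumr; apply: eq_bigr => l _.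
by rewrite scalerA /rc rmorphM.
Qed.

Lemma gibbs_mulmx_inv {n k} beta (E : 'I_k -> R) (P : 'I_k -> 'M[C]_n) :
  proj_family P -> partition_fn beta E P != 0 ->
  gibbs beta E P *m gibbs_inv beta E P = 1%:M.
Proof.
move=> P_proj Z_neq0; rewrite gibbsE fcalc_mulmx // -(fcalc1 E P_proj).
apply: eq_bigr => l _.
by rewrite mulrACA mulVf // -expRD addNr expR0 mul1r.
Qed.

Lemma gibbs_unitmx {n k} beta (E : 'I_k -> R) (P : 'I_k -> 'M[C]_n) :
  proj_family P -> partition_fn beta E P != 0 -> gibbs beta E P \in unitmx.
Proof. by move=> P_proj Z_neq0; case: (mulmx1_unit (gibbs_mulmx_inv P_proj Z_neq0)). Qed.

Lemma mxtrace_mulmx_tensmx_fcalc {m n k l} (M : 'M[C]_(m * n)) (f g : R -> R)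
    (EA : 'I_k -> R) (PA : 'I_k -> 'M[C]_m) (EB : 'I_l -> R) (PB : 'I_l -> 'M[C]_n) :
  \tr (M *m tensmx (fcalc f EA PA) (fcalc g EB PB)) =
  \sum_a \sum_b rc (f (EA a) * g (EB b)) * \tr (M *m tensmx (PA a) (PB b)).
Proof.
rewrite /fcalc tensmx_sum mulmx_sumr raddf_sum /=; apply: eq_bigr => a _.
rewrite mulmx_sumr raddf_sum /=; apply: eq_bigr => b _.
by rewrite tensmxZ -scalemxAr mxtraceZ /rc rmorphM.
Qed.

End SpectralCalculus.

Lemma expR_dissipated_work (R : realType) (beta ZAi ZBi ZAf ZBf eAi eBi eAf eBf : R) :
  beta != 0 -> 0 < ZAi -> 0 < ZBi -> 0 < ZAf -> 0 < ZBf ->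
  expR (- (beta * ((eAf + eBf - eAi - eBi)
                   - - (beta^-1 * ln ((ZAf * ZBf) / (ZAi * ZBi)))))) =
  ZAi * expR (beta * eAi) * (ZBi * expR (beta * eBi)) *
  (ZAf^-1 * expR (- (beta * eAf)) * (ZBf^-1 * expR (- (beta * eBf)))).
Proof.
move=> beta_neq0 ZAi_gt0 ZBi_gt0 ZAf_gt0 ZBf_gt0.
set Q := (ZAf * ZBf) / (ZAi * ZBi).
have Q_gt0 : 0 < Q by rewrite divr_gt0 ?mulr_gt0.
have -> : - (beta * ((eAf + eBf - eAi - eBi) - - (beta^-1 * ln Q))) =
          beta * eAi + beta * eBi + - (beta * eAf) + - (beta * eBf) - ln Q.
  by field.
rewrite !expRD [expR (- ln Q)]expRN lnK ?posrE // /Q.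
by field; rewrite !gt_eqF.
Qed.

Lemma mxtrace_dim0 (R : pzSemiRingType) N (M : 'M[R]_N) : N = 0%N -> \tr M = 0.
Proof. by move=> N0; subst N; rewrite /mxtrace big_ord0. Qed.

Section EPMAverage.
Variables (R : realType) (dA dB nAi nBi nAf nBf : nat).
Variables (EAi : 'I_nAi -> R) (PAi : 'I_nAi -> 'M[R[i]]_dA).
Variables (EBi : 'I_nBi -> R) (PBi : 'I_nBi -> 'M[R[i]]_dB).
Variables (EAf : 'I_nAf -> R) (PAf : 'I_nAf -> 'M[R[i]]_dA).
Variables (EBf : 'I_nBf -> R) (PBf : 'I_nBf -> 'M[R[i]]_dB).
Variables (rho : 'M[R[i]]_(dA * dB)) (Phi : 'M[R[i]]_(dA * dB) -> 'M[R[i]]_(dA * dB)).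

Local Notation epm := (epm_average rho Phi EAi PAi EBi PBi EAf PAf EBf PBf).

Lemma epm_average_dim0 g : (dA * dB = 0)%N -> epm g = 0.
Proof.
move=> d0; do 4!(apply: big1 => ? _).
by rewrite [\tr (Phi rho *m _)]mxtrace_dim0 // mulr0 mul0r.
Qed.

Variable beta : R.
Local Notation Z := (partition_fn beta).
Hypotheses (PAi_proj : proj_family PAi) (PBi_proj : proj_family PBi).
Hypothesis beta_neq0 : beta != 0.
Hypotheses (ZAi_gt0 : 0 < Z EAi PAi) (ZBi_gt0 : 0 < Z EBi PBi).
Hypotheses (ZAf_gt0 : 0 < Z EAf PAf) (ZBf_gt0 : 0 < Z EBf PBf).

Lemma epm_average_jarzynski :
  epm (fun DE => expR (- (beta * (DE - - (beta^-1 *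
         ln ((Z EAf PAf * Z EBf PBf) / (Z EAi PAi * Z EBi PBi))))))) =
  \tr (invmx (tensmx (gibbs beta EAi PAi) (gibbs beta EBi PBi)) *m rho) *
  \tr (tensmx (gibbs beta EAf PAf) (gibbs beta EBf PBf) *m Phi rho).
Proof.
rewrite (invmx_tensmx (gibbs_mulmx_inv PAi_proj (lt0r_neq0 ZAi_gt0))
                      (gibbs_mulmx_inv PBi_proj (lt0r_neq0 ZBi_gt0))).
rewrite ![\tr (tensmx _ _ *m _)]mxtrace_mulC /gibbs_inv !gibbsE.
rewrite !mxtrace_mulmx_tensmx_fcalc /epm_average mulr_suml; apply: eq_bigr => lA _.
rewrite mulr_suml; apply: eq_bigr => lB _.
rewrite mulr_sumr; apply: eq_bigr => kA _.
rewrite mulr_sumr; apply: eq_bigr => kB _.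
rewrite expR_dissipated_work // /rc !rmorphM /=; ring.
Qed.

End EPMAverage.

Lemma scalar_mxtrace_mulmx (R : comPzRingType) n (A : 'M[R]_n) :
  scalar (fun X => \tr (A *m X)).
Proof. by move=> a X Y; rewrite mulmxDr -scalemxAr mxtraceD mxtraceZ. Qed.

Lemma scalar_mxtrace_mulmx_map (R : realType) n (A : 'M[R[i]]_n)
    (Phi : 'M[R[i]]_n -> 'M[R[i]]_n) :
  linear_map Phi -> scalar (fun X => \tr (A *m Phi X)).
Proof. by move=> Phi_linear a X Y; rewrite Phi_linear; apply: scalar_mxtrace_mulmx. Qed.

Section ScalarFunctional.
Variables (R : realType) (N : nat) (T : 'M[R[i]]_N -> R[i]).
Hypothesis T_scalar : scalar T.
HB.instance Definition _ := GRing.isLinear.Build _ _ _ _ T T_scalar.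

Lemma scalar_BSA_split J (lam : R) (rhoE g : 'M[R[i]]_N) (r c : 'I_J -> R)
    (M d e : 'I_J -> 'M[R[i]]_N) :
  (forall j, M j = rc (c j) *: g + d j + e j) ->
  T (rc lam *: rhoE + rc (1 - lam) *: \sum_j rc (r j) *: M j) =
  rc lam * T rhoE +
  rc (1 - lam) * \sum_j rc (r j) * (rc (c j) * T g + T (d j) + T (e j)).
Proof.
move=> M_split; rewrite linearD !linearZ linear_sum /=; congr (_ + _ * _).
by apply: eq_bigr => j _; rewrite linearZ M_split !linearD linearZ.
Qed.

End ScalarFunctional.

Lemma tensmx_split_rho_dj_rho_cj (R : realType) m n (aA cA aB cB : R)
    (gA tdA tcA tauA rhoA : 'M[R[i]]_m) (gB tdB tcB tauB rhoB : 'M[R[i]]_n) :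
  rhoA = rc (1 - aA) *: gA + rc aA *: tauA ->
  tauA = rc (1 - cA) *: tdA + rc cA *: tcA ->
  rhoB = rc (1 - aB) *: gB + rc aB *: tauB ->
  tauB = rc (1 - cB) *: tdB + rc cB *: tcB ->
  tensmx rhoA rhoB = rc ((1 - aA) * (1 - aB)) *: tensmx gA gB
    + rho_dj aA cA aB cB gA gB tdA tdB + rho_cj aA cA aB cB gA gB tdA tcA tdB tcB.
Proof.
move=> -> -> -> ->; apply/matrixP => p q; rewrite /rho_dj /rho_cj !mxE.
rewrite /rc !rmorphM !rmorphB !rmorph1 /=; ring.
Qed.

Theorem mainTheorem7 (R : realType) (dA dB nAi nBi nAf nBf : nat)
  (EAi : 'I_nAi -> R) (PAi : 'I_nAi -> 'M[R[i]]_dA)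
  (EBi : 'I_nBi -> R) (PBi : 'I_nBi -> 'M[R[i]]_dB)
  (EAf : 'I_nAf -> R) (PAf : 'I_nAf -> 'M[R[i]]_dA)
  (EBf : 'I_nBf -> R) (PBf : 'I_nBf -> 'M[R[i]]_dB)
  (Phi : 'M[R[i]]_(dA * dB) -> 'M[R[i]]_(dA * dB)) (beta : R)
  (UA : 'M[R[i]]_dA) (UB : 'M[R[i]]_dB)
  (rho_i rhoE : 'M[R[i]]_(dA * dB)) (lam : R)
  (J : nat) (r : 'I_J -> R)
  (rhoA tauA tdA tcA : 'I_J -> 'M[R[i]]_dA)
  (rhoB tauB tdB tcB : 'I_J -> 'M[R[i]]_dB)
  (aA cA aB cB : 'I_J -> R) :
  proj_family PAi -> proj_family PBi -> proj_family PAf -> proj_family PBf ->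
  CPTP Phi -> 0 < beta ->
  eigenbasis UA (hamiltonian EAi PAi) -> eigenbasis UB (hamiltonian EBi PBi) ->
  (forall j, 0 <= r j) -> \sum_j r j = 1 ->
  (forall j, density (rhoA j) /\ density (rhoB j)) ->
  is_BSA rho_i lam rhoE (\sum_j rc (r j) *: tensmx (rhoA j) (rhoB j)) ->
  (forall j, athermality_decomp (gibbs beta EAi PAi) (rhoA j) (aA j) (tauA j)) ->
  (forall j, athermality_decomp (gibbs beta EBi PBi) (rhoB j) (aB j) (tauB j)) ->
  (forall j, coherence_decomp UA (tauA j) (cA j) (tdA j) (tcA j)) ->
  (forall j, coherence_decomp UB (tauB j) (cB j) (tdB j) (tcB j)) ->
  let gAi := gibbs beta EAi PAi in
  let gBi := gibbs beta EBi PBi in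
  let gAf := gibbs beta EAf PAf in
  let gBf := gibbs beta EBf PBf in
  let gi := tensmx gAi gBi in
  let gf := tensmx gAf gBf in
  let DF := - (beta^-1 * ln ((partition_fn beta EAf PAf * partition_fn beta EBf PBf)
                / (partition_fn beta EAi PAi * partition_fn beta EBi PBi))) in
  let rd j := rho_dj (aA j) (cA j) (aB j) (cB j) gAi gBi (tdA j) (tdB j) in
  let rcj j := rho_cj (aA j) (cA j) (aB j) (cB j) gAi gBi (tdA j) (tcA j) (tdB j) (tcB j) in
  let Ji := rc lam * \tr (invmx gi *m rhoE) +
            rc (1 - lam) * \sum_j rc (r j) *
              (rc ((1 - aA j) * (1 - aB j)) * (dA * dB)%:R
               + \tr (invmx gi *m rd j) + \tr (invmx gi *m rcj j)) in
  let Jf := rc lam * \tr (gf *m Phi rhoE) +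
            rc (1 - lam) * \sum_j rc (r j) *
              (rc ((1 - aA j) * (1 - aB j)) * \tr (gf *m Phi gi)
               + \tr (gf *m Phi (rd j)) + \tr (gf *m Phi (rcj j))) in
  epm_average rho_i Phi EAi PAi EBi PBi EAf PAf EBf PBf
    (fun DE => expR (- (beta * (DE - DF)))) = Ji * Jf.
Proof.
move=> PAi_proj PBi_proj PAf_proj PBf_proj [Phi_linear _] beta_gt0 _ _ _ _ _
  [_ [_ [_ [rho_i_mix _]]]] athA athB cohA cohB gAi gBi gAf gBf gi gf DF rd rcj Ji Jf.
have rhoAB_split j :
    tensmx (rhoA j) (rhoB j) = rc ((1 - aA j) * (1 - aB j)) *: gi + rd j + rcj j.
  have [_ [_ [rhoAj _]]] := athA j; have [_ [_ [rhoBj _]]] := athB j.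
  have [_ [_ [_ [_ [tauAj _]]]]] := cohA j; have [_ [_ [_ [_ [tauBj _]]]]] := cohB j.
  exact: tensmx_split_rho_dj_rho_cj rhoAj tauAj rhoBj tauBj.
have Jf_eq : Jf = \tr (gf *m Phi rho_i).
  have Jf_scalar := scalar_mxtrace_mulmx_map gf Phi_linear.
  by rewrite rho_i_mix (scalar_BSA_split Jf_scalar _ _ _ rhoAB_split).
(* In dimension 0 the partition functions vanish, so DF is a junk value;
   both sides are 0 anyway. *)
have [d0 | d_gt0] := posnP (dA * dB).
  by rewrite epm_average_dim0 // Jf_eq mxtrace_dim0 // mulr0.
have /andP[dA_gt0 dB_gt0] : (0 < dA)%N && (0 < dB)%N by rewrite -muln_gt0.
rewrite epm_average_jarzynski ?gt_eqF ?partition_fn_gt0 // Jf_eq; congr (_ * _).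
have gi_unit : gi \in unitmx.
  by apply: tensmx_unit; rewrite -?lt0n ?gibbs_unitmx ?lt0r_neq0 ?partition_fn_gt0.
rewrite rho_i_mix (scalar_BSA_split (scalar_mxtrace_mulmx (invmx gi)) _ _ _ rhoAB_split).
by rewrite /= mulVmx ?mxtrace1.
Qed.
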